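(* Let $0<\gamma<1/2$ and let $\ell\ge1$ be a fixed integer. There is a sequence $\varepsilon_n\to0$ with the following property. Let $n$ be given, let $\mathcal X\subset B(0,R_n)\setminus\mathring B(0,(1-\gamma)R_n)$ be any finite set, and form the graph on $\mathcal X$ joining two points iff their hyperbolic distance is at most $R_n$. If $y_1,y_2\in\mathcal X$ are joined by a path of length $\ell$ in this graph, then the angle $\theta_{12}$ between $y_1$ and $y_2$ as seen from the origin satisfies $$\theta_{12}\le(1+\varepsilon_n)\,2\ell\,e^{-\zeta(1-2\gamma)R_n/2}.$$
   Context: Fix an integer $d\ge2$ and $\zeta>0$. The Poincaré ball $B_d^{(\zeta)}$ is the open unit ball of $\mathbb R^d$ with metric $ds^2=\frac{4}{\zeta^2}\frac{|dx|^2}{(1-|x|^2)^2}$ and hyperbolic distance $d(\cdot,\cdot)$. $B(0,R)$ is the closed hyperbolic ball of radius $R$ about the origin, and $\mathring B$ its interior. $R_n\to\infty$ is a deterministic sequence. The angle between two points is the Euclidean angle between their position vectors. *)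

From Stdlib Require Import Reals Lra List.
Open Scope R_scope.

(* Points of R^d are represented as functions nat -> R; only the
   coordinates 0..d-1 are ever used. *)
Definition point := nat -> R.

Definition sumd (d : nat) (f : nat -> R) : R :=
  fold_right Rplus 0 (map f (seq 0 d)).

Definition dot (d : nat) (x y : point) : R := sumd d (fun i => x i * y i).
Definition norm2 (d : nat) (x : point) : R := dot d x x.
Definition enorm (d : nat) (x : point) : R := sqrt (norm2 d x).
Definition dist2 (d : nat) (x y : point) : R :=
  sumd d (fun i => (x i - y i) ^ 2).

Definition in_unit_ball (d : nat) (x : point) : Prop := norm2 d x < 1.

Definition arcosh (t : R) : R := ln (t + sqrt (t ^ 2 - 1)).

(* Hyperbolic distance in the Poincare ball B_d^(zeta), metric
   ds^2 = (4/zeta^2) |dx|^2 / (1-|x|^2)^2. *)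
Definition hdist (d : nat) (zeta : R) (x y : point) : R :=
  / zeta * arcosh (1 + 2 * dist2 d x y / ((1 - norm2 d x) * (1 - norm2 d y))).

Definition origin : point := fun _ => 0.

Definition hball (d : nat) (zeta R0 : R) (x : point) : Prop :=
  in_unit_ball d x /\ hdist d zeta origin x <= R0.

Definition hball_open (d : nat) (zeta R0 : R) (x : point) : Prop :=
  in_unit_ball d x /\ hdist d zeta origin x < R0.

Definition angle (d : nat) (x y : point) : R :=
  acos (dot d x y / (enorm d x * enorm d y)).

Definition adjacent (d : nat) (zeta Rn : R) (x y : point) : Prop :=
  x <> y /\ hdist d zeta x y <= Rn.

Fixpoint consec_adj (d : nat) (zeta Rn : R) (p : list point) : Prop :=
  match p with
  | x :: ((y :: _) as q) => adjacent d zeta Rn x y /\ consec_adj d zeta Rn q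
  | _ => True
  end.

Definition is_path (d : nat) (zeta Rn : R) (X : list point) (l : nat)
    (y1 y2 : point) (p : list point) : Prop :=
  length p = S l /\ NoDup p /\ (forall v, In v p -> In v X) /\
  hd y2 p = y1 /\ last p y1 = y2 /\ consec_adj d zeta Rn p.

From Stdlib Require Import Reals List Lra Psatz.
Open Scope R_scope.

(* A point x of the annulus satisfies 1 - |x|^2 <= delta := 4 e^(-zeta (1-gamma) R),
   because cosh (zeta d(0,x)) = (1 + |x|^2) / (1 - |x|^2).  Since
   cosh (zeta d(x,y)) = 1 + 2 |x-y|^2 / ((1 - |x|^2) (1 - |y|^2)), two such points
   at hyperbolic distance <= R are at Euclidean distance
   <= e^(zeta R / 2) delta / 2 = 2 e^(-zeta (1-2gamma) R / 2), so the endpoints of a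
   path with l edges are at Euclidean distance <= D := 2 l e^(-zeta (1-2gamma) R / 2).
   Near the unit sphere chord and angle agree:  2 |y1| |y2| (1 - cos theta) <= |y1-y2|^2
   and 1 - cos theta >= theta^2/2 - theta^4/24 give theta <= (1 + O(delta + D^2)) D. *)

Section Euclidean.

Variable d : nat.

Lemma sumd_ext (f g : nat -> R) : (forall i, f i = g i) -> sumd d f = sumd d g.
Proof.
  intro Hfg; unfold sumd; induction (seq 0 d) as [|k s IH]; simpl; [reflexivity|].
  now rewrite IH, Hfg.
Qed.

Lemma sumd_nonneg (f : nat -> R) : (forall i, 0 <= f i) -> 0 <= sumd d f.
Proof.
  intro Hf; unfold sumd; induction (seq 0 d) as [|k s IH]; simpl; [lra|].
  specialize (Hf k); lra.
Qed.

Lemma sumd_lincomb3 (a b c : R) (f g h : nat -> R) :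
  sumd d (fun i => a * f i + b * g i + c * h i) =
  a * sumd d f + b * sumd d g + c * sumd d h.
Proof.
  unfold sumd; induction (seq 0 d) as [|k s IH]; simpl; [ring|].
  rewrite IH; ring.
Qed.

Lemma norm2_nonneg (x : point) : 0 <= norm2 d x.
Proof. apply sumd_nonneg; intro i; nra. Qed.

Lemma dist2_nonneg (x y : point) : 0 <= dist2 d x y.
Proof. apply sumd_nonneg; intro i; apply pow2_ge_0. Qed.

Lemma dist2_eq (x y : point) :
  dist2 d x y = norm2 d x + norm2 d y - 2 * dot d x y.
Proof.
  unfold dist2, norm2, dot.
  rewrite (sumd_ext _ (fun i => 1 * (x i * x i) + 1 * (y i * y i) + (-2) * (x i * y i)))
    by (intro; ring).
  rewrite sumd_lincomb3; ring.
Qed.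

Lemma dist2_diag (x : point) : dist2 d x x = 0.
Proof.
  unfold dist2; rewrite (sumd_ext _ (fun i => 0 * 0 + 0 * 0 + 0 * 0)) by (intro; ring).
  rewrite sumd_lincomb3; ring.
Qed.

Lemma norm2_origin : norm2 d origin = 0.
Proof.
  unfold norm2, dot, origin.
  rewrite (sumd_ext _ (fun i => 0 * 0 + 0 * 0 + 0 * 0)) by (intro; ring).
  rewrite sumd_lincomb3; ring.
Qed.

Lemma dist2_origin_l (x : point) : dist2 d origin x = norm2 d x.
Proof. unfold dist2, norm2, dot, origin; apply sumd_ext; intro; ring. Qed.

Lemma discriminant_le (a b c : R) :
  0 <= c -> (forall t, 0 <= a - 2 * t * b + t ^ 2 * c) -> b ^ 2 <= a * c.
Proof.
  intros Hc Hq.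
  destruct (Req_dec c 0) as [->|Hc0].
  - destruct (Req_dec b 0) as [->|Hb]; [specialize (Hq 0); nra|].
    specialize (Hq ((a + 1) / (2 * b))).
    replace (a - 2 * ((a + 1) / (2 * b)) * b + ((a + 1) / (2 * b)) ^ 2 * 0)
      with (-1) in Hq by (field; exact Hb).
    lra.
  - specialize (Hq (b / c)).
    replace (a - 2 * (b / c) * b + (b / c) ^ 2 * c) with ((a * c - b ^ 2) / c) in Hq
      by (field; exact Hc0).
    assert (Hprod : 0 <= (a * c - b ^ 2) / c * c) by (apply Rmult_le_pos; lra).
    replace ((a * c - b ^ 2) / c * c) with (a * c - b ^ 2) in Hprod by (field; exact Hc0).
    lra.
Qed.

Lemma dot_sq_le (x y : point) : dot d x y ^ 2 <= norm2 d x * norm2 d y.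
Proof.
  apply discriminant_le; [apply norm2_nonneg|]; intro t.
  replace (norm2 d x - 2 * t * dot d x y + t ^ 2 * norm2 d y)
    with (sumd d (fun i => (x i - t * y i) ^ 2)); [apply sumd_nonneg; intro; apply pow2_ge_0|].
  rewrite (sumd_ext _ (fun i => 1 * (x i * x i) + (- 2 * t) * (x i * y i) + t ^ 2 * (y i * y i)))
    by (intro; ring).
  rewrite sumd_lincomb3; unfold norm2, dot; ring.
Qed.

Lemma abs_dot_le (x y : point) : Rabs (dot d x y) <= enorm d x * enorm d y.
Proof.
  unfold enorm; rewrite <- sqrt_mult by apply norm2_nonneg.
  rewrite <- (sqrt_pow2 (Rabs (dot d x y))) by apply Rabs_pos.
  apply sqrt_le_1_alt; rewrite <- Rsqr_pow2, <- Rsqr_abs, Rsqr_pow2; apply dot_sq_le.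
Qed.

Definition edist (x y : point) : R := sqrt (dist2 d x y).

Lemma edist_diag (x : point) : edist x x = 0.
Proof. unfold edist; rewrite dist2_diag; exact sqrt_0. Qed.

Lemma edist_triangle (x y z : point) : edist x z <= edist x y + edist y z.
Proof.
  set (u := fun i => x i - y i); set (v := fun i => y i - z i).
  assert (Hxy : dist2 d x y = norm2 d u)
    by (unfold dist2, norm2, dot, u; apply sumd_ext; intro; ring).
  assert (Hyz : dist2 d y z = norm2 d v)
    by (unfold dist2, norm2, dot, v; apply sumd_ext; intro; ring).
  assert (Hxz : dist2 d x z = norm2 d u + norm2 d v + 2 * dot d u v).
  { unfold dist2, norm2, dot, u, v.
    rewrite (sumd_ext _ (fun i => 1 * ((x i - y i) * (x i - y i))
        + 1 * ((y i - z i) * (y i - z i)) + 2 * ((x i - y i) * (y i - z i)))) by (intro; ring).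
    rewrite sumd_lincomb3; ring. }
  pose proof (Rle_abs (dot d u v)); pose proof (abs_dot_le u v).
  unfold edist; rewrite Hxz, Hxy, Hyz; unfold enorm in *.
  pose proof (sqrt_pos (norm2 d u)); pose proof (sqrt_pos (norm2 d v)).
  pose proof (sqrt_sqrt _ (norm2_nonneg u)); pose proof (sqrt_sqrt _ (norm2_nonneg v)).
  rewrite <- (sqrt_pow2 (sqrt (norm2 d u) + sqrt (norm2 d v))) by lra.
  apply sqrt_le_1_alt; nra.
Qed.

Lemma norm2_le_enorm (x : point) : norm2 d x <= 1 -> norm2 d x <= enorm d x.
Proof.
  intro Hx; unfold enorm.
  pose proof (norm2_nonneg x); pose proof (sqrt_pos (norm2 d x)).
  pose proof (sqrt_sqrt _ (norm2_nonneg x)).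
  assert (sqrt (norm2 d x) <= 1) by (rewrite <- sqrt_1; apply sqrt_le_1_alt; lra).
  nra.
Qed.

End Euclidean.

Lemma one_sub_cos_angle_le d (x y : point) :
  0 < norm2 d x -> 0 < norm2 d y ->
  2 * (enorm d x * enorm d y) * (1 - cos (angle d x y)) <= dist2 d x y.
Proof.
  intros Hx Hy; unfold angle.
  pose proof (abs_dot_le d x y) as Hdot.
  assert (Hex : 0 < enorm d x) by (apply sqrt_lt_R0; exact Hx).
  assert (Hey : 0 < enorm d y) by (apply sqrt_lt_R0; exact Hy).
  set (m := enorm d x * enorm d y) in *.
  assert (Hm : 0 < m) by (unfold m; nra).
  assert (Hk : Rabs (dot d x y / m) <= 1).
  { unfold Rdiv; rewrite Rabs_mult, Rabs_inv, (Rabs_pos_eq m) by lra.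
    apply (Rmult_le_reg_r m); [lra|].
    rewrite Rmult_assoc, Rinv_l, Rmult_1_r, Rmult_1_l by lra; exact Hdot. }
  rewrite cos_acos.
  2:{ pose proof (Rle_abs (dot d x y / m)); pose proof (Rle_abs (- (dot d x y / m))).
      rewrite Rabs_Ropp in *; lra. }
  replace (2 * m * (1 - dot d x y / m)) with (2 * m - 2 * dot d x y) by (field; lra).
  rewrite dist2_eq; unfold m, enorm.
  pose proof (sqrt_sqrt _ (norm2_nonneg d x)); pose proof (sqrt_sqrt _ (norm2_nonneg d y)).
  pose proof (pow2_ge_0 (sqrt (norm2 d x) - sqrt (norm2 d y))).
  nra.
Qed.

Lemma sq_mul_le_of_one_sub_cos_le (t c : R) :
  0 <= t <= PI -> 1 - cos t <= c -> c < 1 -> t ^ 2 * (1 - c) <= 2 * c.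
Proof.
  intros Ht Hcos Hc.
  assert (Ht2 : t <= PI / 2).
  { destruct (Rle_or_lt t (PI / 2)) as [|Hlt]; [assumption|].
    pose proof (cos_lt_0 t Hlt ltac:(lra)); lra. }
  pose proof PI_4.
  pose proof (cos_bound t 0 ltac:(lra) Ht2) as [_ Hub].
  unfold cos_approx, cos_term in Hub; simpl in Hub.
  assert (Hub' : cos t <= 1 - t ^ 2 / 2 + t ^ 4 / 24) by (eapply Rle_trans; [exact Hub|]; right; field).
  assert (Hc0 : 0 <= c) by (pose proof (COS_bound t); lra).
  assert (Hs : t ^ 2 <= 4) by nra.
  assert (Hs3 : t ^ 2 <= 3 * c) by nra.
  nra.
Qed.

Lemma exp_le_exp (a b : R) : a <= b -> exp a <= exp b.
Proof. intros [Hlt|Heq]; [left; apply exp_increasing, Hlt|right; rewrite Heq; reflexivity]. Qed.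

Lemma exp_arcosh_bounds (a : R) : 1 <= a -> 2 * a - 1 <= exp (arcosh a) <= 2 * a.
Proof.
  intro Ha; unfold arcosh.
  pose proof (sqrt_pos (a ^ 2 - 1)).
  rewrite exp_ln by lra.
  assert (a - 1 <= sqrt (a ^ 2 - 1))
    by (rewrite <- (sqrt_pow2 (a - 1)) by lra; apply sqrt_le_1_alt; nra).
  assert (sqrt (a ^ 2 - 1) <= a)
    by (rewrite <- (sqrt_pow2 a) at 2 by lra; apply sqrt_le_1_alt; lra).
  lra.
Qed.

Definition cosh_hdist (d : nat) (x y : point) : R :=
  1 + 2 * dist2 d x y / ((1 - norm2 d x) * (1 - norm2 d y)).

Lemma exp_hdist_bounds d zeta (x y : point) :
  0 < zeta -> norm2 d x < 1 -> norm2 d y < 1 ->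
  2 * cosh_hdist d x y - 1 <= exp (zeta * hdist d zeta x y) <= 2 * cosh_hdist d x y.
Proof.
  intros Hz Hx Hy.
  replace (zeta * hdist d zeta x y) with (arcosh (cosh_hdist d x y))
    by (unfold hdist, cosh_hdist; field; lra).
  apply exp_arcosh_bounds; unfold cosh_hdist.
  pose proof (dist2_nonneg d x y).
  assert (0 <= 2 * dist2 d x y / ((1 - norm2 d x) * (1 - norm2 d y)))
    by (apply Rmult_le_pos; [lra|left; apply Rinv_0_lt_compat; nra]).
  lra.
Qed.

Lemma cosh_hdist_origin_l d (x : point) :
  norm2 d x < 1 -> cosh_hdist d origin x = (1 + norm2 d x) / (1 - norm2 d x).
Proof.
  intro Hx; unfold cosh_hdist; rewrite dist2_origin_l, norm2_origin; field; lra.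
Qed.

Lemma one_sub_norm2_le_of_le_hdist_origin d zeta r (x : point) :
  0 < zeta -> norm2 d x < 1 -> r <= hdist d zeta origin x ->
  1 - norm2 d x <= 4 * exp (- (zeta * r)).
Proof.
  intros Hz Hx Hr.
  assert (H0 : norm2 d origin < 1) by (rewrite norm2_origin; lra).
  pose proof (exp_hdist_bounds d zeta origin x Hz H0 Hx) as [_ Hub].
  rewrite cosh_hdist_origin_l in Hub by exact Hx.
  pose proof (exp_le_exp _ _ (Rmult_le_compat_l zeta _ _ (Rlt_le _ _ Hz) Hr)) as Hmono.
  pose proof (norm2_nonneg d x); pose proof (exp_pos (zeta * r)).
  assert (Hprod : exp (zeta * r) * (1 - norm2 d x) <= 2 * (1 + norm2 d x)).
  { replace (2 * (1 + norm2 d x)) with (2 * ((1 + norm2 d x) / (1 - norm2 d x)) * (1 - norm2 d x))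
      by (field; lra).
    apply Rmult_le_compat_r; lra. }
  rewrite exp_Ropp.
  apply (Rmult_le_reg_l (exp (zeta * r))); [lra|].
  replace (exp (zeta * r) * (4 * / exp (zeta * r))) with 4 by (field; lra).
  lra.
Qed.

Lemma edist_le_of_hdist_le d zeta R0 delta (x y : point) :
  0 < zeta -> norm2 d x < 1 -> norm2 d y < 1 ->
  1 - norm2 d x <= delta -> 1 - norm2 d y <= delta ->
  hdist d zeta x y <= R0 -> edist d x y <= exp (zeta * R0 / 2) * delta / 2.
Proof.
  intros Hz Hx Hy Hdx Hdy Hr.
  pose proof (exp_hdist_bounds d zeta x y Hz Hx Hy) as [Hlb _].
  pose proof (exp_le_exp _ _ (Rmult_le_compat_l zeta _ _ (Rlt_le _ _ Hz) Hr)) as Hmono.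
  unfold cosh_hdist in Hlb.
  set (g := (1 - norm2 d x) * (1 - norm2 d y)) in *.
  assert (Hg : 0 < g <= delta ^ 2).
  { pose proof (norm2_nonneg d x); pose proof (norm2_nonneg d y); unfold g; split; nra. }
  assert (H4 : 4 * dist2 d x y <= (exp (zeta * R0) - 1) * g).
  { replace (4 * dist2 d x y) with ((2 * (1 + 2 * dist2 d x y / g) - 1 - 1) * g)
      by (field; lra).
    apply Rmult_le_compat_r; lra. }
  replace (exp (zeta * R0)) with (exp (zeta * R0 / 2) ^ 2) in H4
    by (simpl; rewrite Rmult_1_r, <- exp_plus; f_equal; field).
  pose proof (exp_pos (zeta * R0 / 2)).
  unfold edist; rewrite <- (sqrt_pow2 (exp (zeta * R0 / 2) * delta / 2)) by nra.
  apply sqrt_le_1_alt; nra.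
Qed.

Lemma annulus_norm2_bounds d zeta R0 r (x : point) :
  0 < zeta -> hball d zeta R0 x -> ~ hball_open d zeta r x ->
  norm2 d x < 1 /\ 1 - norm2 d x <= 4 * exp (- (zeta * r)).
Proof.
  intros Hz [Hx _] Hout; split; [exact Hx|].
  apply one_sub_norm2_le_of_le_hdist_origin; [exact Hz|exact Hx|].
  apply Rnot_lt_le; intro Hlt; apply Hout; split; assumption.
Qed.

Definition annulus_gap (zeta gamma R0 : R) : R := 4 * exp (- (zeta * ((1 - gamma) * R0))).

Lemma edist_le_in_annulus d zeta gamma R0 (x y : point) :
  0 < zeta -> norm2 d x < 1 -> norm2 d y < 1 ->
  1 - norm2 d x <= annulus_gap zeta gamma R0 -> 1 - norm2 d y <= annulus_gap zeta gamma R0 ->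
  hdist d zeta x y <= R0 ->
  edist d x y <= 2 * exp (- zeta * (1 - 2 * gamma) * R0 / 2).
Proof.
  intros Hz Hx Hy Hdx Hdy Hr.
  eapply Rle_trans; [exact (edist_le_of_hdist_le d zeta R0 _ x y Hz Hx Hy Hdx Hdy Hr)|].
  right; unfold annulus_gap.
  replace (exp (zeta * R0 / 2) * (4 * exp (- (zeta * ((1 - gamma) * R0)))) / 2)
    with (2 * (exp (zeta * R0 / 2) * exp (- (zeta * ((1 - gamma) * R0))))) by field.
  rewrite <- exp_plus; f_equal; f_equal; field.
Qed.

Section Paths.

Variables (d : nat) (zeta R0 B : R) (P : point -> Prop).

Hypothesis edist_adjacent_le :
  forall x y, P x -> P y -> adjacent d zeta R0 x y -> edist d x y <= B.

Lemma edist_last_le (rest : list point) :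
  forall x e, P x -> (forall v, In v rest -> P v) ->
  consec_adj d zeta R0 (x :: rest) ->
  edist d x (last (x :: rest) e) <= INR (length rest) * B.
Proof.
  induction rest as [|y rest IH]; intros x e Px Prest Hadj.
  - simpl; rewrite edist_diag; lra.
  - destruct Hadj as [Hxy Hrest].
    assert (Py : P y) by (apply Prest; left; reflexivity).
    pose proof (IH y e Py (fun v Hv => Prest v (or_intror Hv)) Hrest).
    pose proof (edist_adjacent_le x y Px Py Hxy).
    pose proof (edist_triangle d x y (last (y :: rest) e)).
    change (last (x :: y :: rest) e) with (last (y :: rest) e).
    change (length (y :: rest)) with (S (length rest)); rewrite S_INR; lra.
Qed.

End Paths.

Lemma edist_le_of_is_path d zeta R0 B (X : list point) l (y1 y2 : point) (p : list point) :
  (forall x y, In x X -> In y X -> adjacent d zeta R0 x y -> edist d x y <= B) ->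
  is_path d zeta R0 X l y1 y2 p -> edist d y1 y2 <= INR l * B.
Proof.
  intros Hadj (Hlen & _ & Hin & Hhd & Hlast & Hc).
  destruct p as [|x rest]; [discriminate|].
  simpl in Hhd, Hlen; subst x; injection Hlen as <-; subst y2.
  apply (edist_last_le d zeta R0 B (fun v => In v X)); auto.
  - apply Hin; left; reflexivity.
  - intros v Hv; apply Hin; right; exact Hv.
Qed.

Definition angle_slack (delta D : R) : R := D ^ 2 / (2 * (1 - delta) ^ 2).

Lemma angle_slack_bounds (delta D : R) :
  0 <= delta <= 1 / 8 -> 0 <= angle_slack delta D <= D ^ 2.
Proof.
  intro Hdelta; unfold angle_slack; split.
  - apply Rmult_le_pos; [nra|left; apply Rinv_0_lt_compat; nra].
  - apply (Rmult_le_reg_r (2 * (1 - delta) ^ 2)); [nra|].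
    replace (D ^ 2 / (2 * (1 - delta) ^ 2) * (2 * (1 - delta) ^ 2)) with (D ^ 2) by (field; nra).
    nra.
Qed.

(* Outside the small regime only [angle <= PI] is available, and the [else]
   branch makes [(1 + angle_eps delta D) * D = D + PI]. *)
Definition angle_eps (delta D : R) : R :=
  if Rle_dec (delta + D ^ 2) (1 / 8)
  then / ((1 - delta) * (1 - angle_slack delta D)) - 1
  else PI / D.

Lemma angle_le_of_edist_le d (y1 y2 : point) (delta D : R) :
  0 <= delta -> 0 < D ->
  1 - delta <= norm2 d y1 <= 1 -> 1 - delta <= norm2 d y2 <= 1 ->
  edist d y1 y2 <= D -> angle d y1 y2 <= (1 + angle_eps delta D) * D.
Proof.
  intros Hdelta HD Hy1 Hy2 Hdist.
  pose proof (acos_bound (dot d y1 y2 / (enorm d y1 * enorm d y2))) as Hpi.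
  fold (angle d y1 y2) in Hpi.
  unfold angle_eps; destruct (Rle_dec _ _) as [Hsmall|_].
  2:{ replace ((1 + PI / D) * D) with (D + PI) by (field; lra); lra. }
  assert (Hdelta8 : delta <= 1 / 8) by nra.
  pose proof (angle_slack_bounds delta D ltac:(lra)) as Hc.
  set (c := angle_slack delta D) in *.
  assert (Hm : (1 - delta) ^ 2 <= enorm d y1 * enorm d y2).
  { pose proof (norm2_le_enorm d y1 (proj2 Hy1)).
    pose proof (norm2_le_enorm d y2 (proj2 Hy2)); nra. }
  assert (Hd2 : dist2 d y1 y2 <= D ^ 2).
  { unfold edist in Hdist.
    rewrite <- (sqrt_sqrt (dist2 d y1 y2)) by apply dist2_nonneg.
    pose proof (sqrt_pos (dist2 d y1 y2)); nra. }
  assert (Hcos : 1 - cos (angle d y1 y2) <= c).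
  { pose proof (one_sub_cos_angle_le d y1 y2 ltac:(lra) ltac:(lra)) as Hchord.
    pose proof (COS_bound (angle d y1 y2)).
    unfold c, angle_slack.
    apply (Rmult_le_reg_r (2 * (1 - delta) ^ 2)); [nra|].
    replace (D ^ 2 / (2 * (1 - delta) ^ 2) * (2 * (1 - delta) ^ 2)) with (D ^ 2) by (field; nra).
    nra. }
  pose proof (sq_mul_le_of_one_sub_cos_le (angle d y1 y2) c ltac:(lra) Hcos ltac:(lra)) as Ht.
  replace (2 * c) with ((D / (1 - delta)) ^ 2) in Ht by (unfold c, angle_slack; field; lra).
  assert (Hlin : angle d y1 y2 * (1 - c) <= D / (1 - delta)).
  { assert (0 <= D / (1 - delta)) by (apply Rmult_le_pos; [lra|left; apply Rinv_0_lt_compat; lra]).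
    nra. }
  replace ((1 + (/ ((1 - delta) * (1 - c)) - 1)) * D) with (D / (1 - delta) / (1 - c)) by (field; lra).
  apply (Rmult_le_reg_r (1 - c)); [lra|].
  replace (D / (1 - delta) / (1 - c) * (1 - c)) with (D / (1 - delta)) by (field; lra).
  exact Hlin.
Qed.

Lemma abs_angle_eps_le (delta D eta : R) :
  0 <= delta <= eta -> D ^ 2 <= eta -> eta <= 1 / 16 ->
  Rabs (angle_eps delta D) <= 3 * eta.
Proof.
  intros Hdelta HD Heta.
  unfold angle_eps; destruct (Rle_dec _ _) as [_|Hbig]; [|lra].
  pose proof (angle_slack_bounds delta D ltac:(lra)) as Hc.
  set (c := angle_slack delta D) in *.
  set (q := (1 - delta) * (1 - c)).
  assert (Hq : 1 - 2 * eta <= q <= 1) by (unfold q; nra).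
  assert (Hinv : 1 <= / q <= 1 + 3 * eta).
  { split.
    - rewrite <- Rinv_1; apply Rinv_le_contravar; lra.
    - apply (Rmult_le_reg_r q); [lra|]; rewrite Rinv_l by lra; nra. }
  rewrite Rabs_pos_eq; lra.
Qed.

Lemma angle_eps_cv_0 (deltas Ds : nat -> R) :
  (forall n, 0 <= deltas n) -> Un_cv deltas 0 -> Un_cv Ds 0 ->
  Un_cv (fun n => angle_eps (deltas n) (Ds n)) 0.
Proof.
  intros Hpos Hdelta HD e He.
  set (eta := Rmin (1 / 16) (e / 4)).
  assert (Heta : 0 < eta /\ eta <= 1 / 16 /\ eta <= e / 4).
  { unfold eta; repeat split; [apply Rmin_pos; lra|apply Rmin_l|apply Rmin_r]. }
  pose proof (CV_mult Ds Ds 0 0 HD HD) as HD2; rewrite Rmult_0_r in HD2.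
  destruct (Hdelta eta (proj1 Heta)) as [N1 HN1].
  destruct (HD2 eta (proj1 Heta)) as [N2 HN2].
  exists (max N1 N2); intros n Hn.
  specialize (HN1 n ltac:(lia)); specialize (HN2 n ltac:(lia)).
  unfold Rdist in *; rewrite !Rminus_0_r in *.
  rewrite Rabs_pos_eq in HN1 by apply Hpos.
  rewrite Rabs_pos_eq in HN2 by nra.
  pose proof (abs_angle_eps_le (deltas n) (Ds n) eta
                ltac:(split; [apply Hpos|lra]) ltac:(simpl; lra) ltac:(lra)).
  lra.
Qed.

Lemma mul_exp_decay_cv_0 (C a : R) (Rs : nat -> R) :
  0 < a -> cv_infty Rs -> Un_cv (fun n => C * exp (- (a * Rs n))) 0.
Proof.
  intros Ha HRs.
  assert (Hgrow : cv_infty (fun n => exp (a * Rs n))).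
  { intro M; destruct (HRs (M / a)) as [N HN]; exists N; intros n Hn.
    specialize (HN n Hn).
    pose proof (exp_ineq1_le (a * Rs n)).
    assert (M < a * Rs n).
    { apply (Rmult_lt_compat_l a) in HN; [|exact Ha].
      replace (a * (M / a)) with M in HN by (field; lra); exact HN. }
    lra. }
  replace 0 with (C * 0) by ring.
  apply CV_mult.
  - intros e He; exists 0%nat; intros; unfold Rdist; rewrite Rminus_diag, Rabs_R0; exact He.
  - apply (Un_cv_ext (fun n => / exp (a * Rs n))); [intro; rewrite exp_Ropp; reflexivity|].
    apply cv_infty_cv_0, Hgrow.
Qed.

Definition path_chord (zeta gamma : R) (l : nat) (R0 : R) : R :=
  2 * INR l * exp (- zeta * (1 - 2 * gamma) * R0 / 2).

Lemma annulus_angle_eps_cv_0 zeta gamma l (Rs : nat -> R) :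
  0 < zeta -> gamma < 1 / 2 -> cv_infty Rs ->
  Un_cv (fun n => angle_eps (annulus_gap zeta gamma (Rs n)) (path_chord zeta gamma l (Rs n))) 0.
Proof.
  intros Hzeta Hgamma HRs; apply angle_eps_cv_0.
  - intro n; pose proof (exp_pos (- (zeta * ((1 - gamma) * Rs n)))); unfold annulus_gap; lra.
  - apply (Un_cv_ext (fun n => 4 * exp (- (zeta * (1 - gamma) * Rs n))));
      [intro; unfold annulus_gap; do 3 f_equal; ring|].
    apply mul_exp_decay_cv_0; [nra|exact HRs].
  - apply (Un_cv_ext (fun n => 2 * INR l * exp (- (zeta * (1 - 2 * gamma) / 2 * Rs n))));
      [intro; unfold path_chord; f_equal; f_equal; field|].
    apply mul_exp_decay_cv_0; [nra|exact HRs].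
Qed.

Lemma angle_le_along_annulus_path d zeta gamma l R0 (X : list point) (y1 y2 : point) p :
  0 < zeta -> (1 <= l)%nat ->
  (forall x, In x X -> hball d zeta R0 x /\ ~ hball_open d zeta ((1 - gamma) * R0) x) ->
  In y1 X -> In y2 X -> is_path d zeta R0 X l y1 y2 p ->
  angle d y1 y2 <=
    (1 + angle_eps (annulus_gap zeta gamma R0) (path_chord zeta gamma l R0)) *
    path_chord zeta gamma l R0.
Proof.
  intros Hzeta Hl HX Hy1 Hy2 Hp.
  assert (Hgap : forall x, In x X ->
                 norm2 d x < 1 /\ 1 - norm2 d x <= annulus_gap zeta gamma R0)
    by (intros x Hx; destruct (HX x Hx); eapply annulus_norm2_bounds; eassumption).
  assert (Hpath : edist d y1 y2 <= path_chord zeta gamma l R0).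
  { replace (path_chord zeta gamma l R0)
      with (INR l * (2 * exp (- zeta * (1 - 2 * gamma) * R0 / 2))) by (unfold path_chord; ring).
    apply (edist_le_of_is_path d zeta R0 _ X l y1 y2 p); [|exact Hp].
    intros x y Hx Hy [_ Hxy]; destruct (Hgap x Hx), (Hgap y Hy).
    apply edist_le_in_annulus; assumption. }
  destruct (Hgap y1 Hy1), (Hgap y2 Hy2).
  apply angle_le_of_edist_le; [| |lra|lra|exact Hpath].
  - pose proof (exp_pos (- (zeta * ((1 - gamma) * R0)))); unfold annulus_gap; lra.
  - pose proof (exp_pos (- zeta * (1 - 2 * gamma) * R0 / 2)).
    pose proof (le_INR 1 l Hl); unfold path_chord; change (INR 1) with 1 in *; nra.
Qed.

Theorem mainTheorem12 :
  forall (d : nat) (zeta gamma : R) (l : nat) (Rs : nat -> R),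
    (2 <= d)%nat -> 0 < zeta ->
    0 < gamma -> gamma < 1 / 2 -> (1 <= l)%nat ->
    cv_infty Rs ->
    exists eps : nat -> R,
      Un_cv eps 0 /\
      forall (n : nat) (X : list point),
        (forall x, In x X ->
           hball d zeta (Rs n) x /\ ~ hball_open d zeta ((1 - gamma) * Rs n) x) ->
        forall (y1 y2 : point) (p : list point),
          In y1 X -> In y2 X ->
          is_path d zeta (Rs n) X l y1 y2 p ->
          angle d y1 y2 <=
            (1 + eps n) * (2 * INR l) * exp (- zeta * (1 - 2 * gamma) * Rs n / 2).
Proof.
  intros d zeta gamma l Rs _ Hzeta _ Hgamma Hl HRs.
  exists (fun n => angle_eps (annulus_gap zeta gamma (Rs n)) (path_chord zeta gamma l (Rs n))).
  split; [exact (annulus_angle_eps_cv_0 zeta gamma l Rs Hzeta Hgamma HRs)|].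
  intros n X HX y1 y2 p Hy1 Hy2 Hp.
  rewrite Rmult_assoc.
  exact (angle_le_along_annulus_path d zeta gamma l (Rs n) X y1 y2 p Hzeta Hl HX Hy1 Hy2 Hp).
Qed.
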